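(* If $p$ is an even positive integer, then $\mathrm{ex}(p+2,B_p)=p(p+2)/2$ and $\mathrm{ex}(p+3,B_p)=p(p+4)/2$. If $p$ is an odd positive integer, then $\mathrm{ex}(p+2,B_p)=(p+1)^2/2$ and $\mathrm{ex}(p+3,B_p)=(p+1)(p+3)/2$.
   Context: All graphs are finite and simple. The order of a graph is its number of vertices and its size is its number of edges. For a graph $H$ and a positive integer $n$, the Turán number $\mathrm{ex}(n,H)$ is the maximum size of a simple graph of order $n$ containing no subgraph isomorphic to $H$. The book $B_p$ with $p$ pages is the graph consisting of $p$ triangles sharing a common edge (so $B_p$ has $p+2$ vertices and $2p+1$ edges). *)

From mathcomp Require Import all_boot.
Set Implicit Arguments. Unset Strict Implicit. Unset Printing Implicit Defensive.

Definition simple_graph (n : nat) (e : rel 'I_n) : Prop :=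
  symmetric e /\ irreflexive e.

Definition gsize (n : nat) (e : rel 'I_n) : nat :=
  #|[set xy : 'I_n * 'I_n | (xy.1 < xy.2)%N && e xy.1 xy.2]|.

Definition contains_sub (h n : nat) (eH : rel 'I_h) (eG : rel 'I_n) : Prop :=
  exists f : 'I_h -> 'I_n, injective f /\ forall x y, eH x y -> eG (f x) (f y).

(* The book B_p on 'I_(p+2): spine vertices 0 and 1; pages 2..p+1, each adjacent
   to both 0 and 1; plus the spine edge {0,1}. *)
Definition book (p : nat) : rel 'I_(p + 2) :=
  fun x y =>
    let a := nat_of_ord x in let b := nat_of_ord y in
    [|| (a == 0) && (b == 1), (a == 1) && (b == 0),
        (a <= 1) && (1 < b) | (1 < a) && (b <= 1)].

Arguments contains_sub : clear implicits.
Definition is_turan_number (n : nat) (h : nat) (eH : rel 'I_h) (m : nat) : Prop :=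
  (exists eG : rel 'I_n, simple_graph eG /\ ~ contains_sub h n eH eG /\ gsize eG = m) /\
  (forall eG : rel 'I_n, simple_graph eG -> ~ contains_sub h n eH eG -> gsize eG <= m).
Arguments is_turan_number : clear implicits.
Arguments book : clear implicits.

(* An edge xy spans a copy of B_p exactly when it has p common neighbours, and
   every vertex other than x, y that is not a common neighbour is a non-neighbour
   of x or of y.  Counting non-neighbours d'(v), i.e. degrees in the complement,
   2|E| = n(n-1) - sum_v d'(v), and on n = p + 2 (resp. p + 3) vertices B_p-freeness
   says that every edge misses at least 1 (resp. 2) vertices.  If some vertex has
   d' = 0, all other vertices carry this quota alone; otherwise sum_v d'(v) >= n.
   When n = p + 3 is odd, parity pushes the bound to n + 2.  Complete multipartite
   graphs with parts of size two (and one part of size three when needed) attain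
   the bounds. *)

From mathcomp Require Import all_boot zify.
Set Implicit Arguments. Unset Strict Implicit. Unset Printing Implicit Defensive.

Lemma card_sum_mem (T : finType) (A : {pred T}) : #|A| = \sum_x (x \in A).
Proof. by rewrite -sum1_card big_mkcond. Qed.

Lemma sum_ge_card_gt1 (T : finType) (f : T -> nat) : (forall x, 0 < f x) ->
  #|T| + #|[set x | 1 < f x]| <= \sum_x f x.
Proof.
move=> f_gt0; rewrite !card_sum_mem -big_split /=; apply: leq_sum => x _.
by rewrite inE; have := f_gt0 x; case: (f x) => [|[|k]].
Qed.

Definition nonnbrs n (e : rel 'I_n) (x : 'I_n) : {set 'I_n} :=
  [set z | (z != x) && ~~ e x z].

Definition common_nbrs n (e : rel 'I_n) (x y : 'I_n) : {set 'I_n} :=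
  [set z | e x z && e y z].

Section SimpleGraph.
Variables (n : nat) (e : rel 'I_n).
Hypotheses (e_sym : symmetric e) (e_irr : irreflexive e).

Lemma nonnbrs_sym x y : (x \in nonnbrs e y) = (y \in nonnbrs e x).
Proof. by rewrite !inE e_sym eq_sym. Qed.

Lemma deg_add_card_nonnbrs x : \sum_y e x y + #|nonnbrs e x| = n.-1.
Proof.
have -> : n.-1 = #|predC1 x| by rewrite cardC1 card_ord.
rewrite !card_sum_mem -big_split /=.
apply: eq_bigr => y _; rewrite !inE.
by case: (eqVneq y x) => [->|_]; rewrite ?e_irr //; case: (e x y).
Qed.

Lemma handshake_nonnbrs : 2 * gsize e + \sum_x #|nonnbrs e x| = n * n.-1.
Proof.
have gsize_lt : gsize e = \sum_(x < n) \sum_(y < n) ((x < y) && e x y).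
  by rewrite /gsize card_sum_mem pair_bigA; apply: eq_bigr => xy _; rewrite inE.
have gsize_gt : gsize e = \sum_(x < n) \sum_(y < n) ((y < x) && e x y).
  by rewrite gsize_lt exchange_big; apply: eq_bigr => x _; apply: eq_bigr => y _; rewrite e_sym.
rewrite mul2n -addnn {1}gsize_lt gsize_gt -!big_split -[n in n * _](card_ord n).
rewrite -sum_nat_const; apply: eq_bigr => x _; rewrite -(deg_add_card_nonnbrs x) -big_split /=.
congr (_ + _); apply: eq_bigr => y _.
case: (ltngtP x y) => [||/val_inj ->]; rewrite ?andbF ?addn0 //.
by rewrite e_irr.
Qed.

Lemma sum_nonnbrs_even : ~~ odd (\sum_x #|nonnbrs e x|).
Proof.
have := congr1 odd handshake_nonnbrs; rewrite oddD oddM /= => ->.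
by case: n => // m; rewrite oddM /=; case: (odd m).
Qed.

Lemma card_spine_partition x y : e x y ->
  #|common_nbrs e x y| + #|nonnbrs e x :|: nonnbrs e y| + 2 = n.
Proof.
move=> exy; have xy : x != y by apply: contraTneq exy => ->; rewrite e_irr.
have two : 2 = \sum_z ((z == x) + (z == y)).
  by rewrite big_split /= -!card_sum_mem !card1.
rewrite two !card_sum_mem -!big_split /= -[n in _ = n](card_ord n) card_sum_mem.
apply: eq_bigr => z _; rewrite !inE.
case: (eqVneq z x) => [->|zx]; first by rewrite e_irr (negbTE xy) (e_sym y) exy.
case: (eqVneq z y) => [->|zy]; first by rewrite e_irr exy.
by case: (e x z); case: (e y z).
Qed.

Lemma contains_bookP p :
  contains_sub (p + 2) n (book p) e <-> exists x y, e x y /\ p <= #|common_nbrs e x y|.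
Proof.
split=> [[f [f_inj f_edge]] | [x [y [exy le_p_C]]]].
  have [lt0 lt1] : 0 < p + 2 /\ 1 < p + 2 by rewrite addn2.
  pose i0 := Ordinal lt0; pose i1 := Ordinal lt1.
  exists (f i0), (f i1); split; first exact: f_edge.
  pose page (j : 'I_p) := f (cast_ord (addnC 2 p) (rshift 2 j)).
  have page_inj : injective page.
    by move=> j k /f_inj /cast_ord_inj /rshift_inj.
  rewrite -[p in p <= _]card_ord -(card_imset _ page_inj).
  apply/subset_leq_card/subsetP => _ /imsetP[j _ ->]; rewrite inE.
  by rewrite !f_edge.
pose s := enum (common_nbrs e x y).
have s_nbr z : z \in s -> e x z && e y z by rewrite mem_enum inE.
have xy : x != y by apply: contraTneq exy => ->; rewrite e_irr.
have uniq_xys : uniq [:: x, y & s].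
  rewrite /= inE negb_or xy enum_uniq andbT /=.
  by apply/andP; split; apply/negP => /s_nbr; rewrite e_irr ?andbF.
have size_s : size s = #|common_nbrs e x y| by rewrite cardE.
have size_xys : p + 2 <= size [:: x, y & s] by rewrite /= size_s; lia.
exists (fun i => nth x [:: x, y & s] i); split.
  move=> i j /eqP; rewrite nth_uniq // => [/eqP/val_inj //||].
    exact: leq_trans (ltn_ord i) size_xys.
  exact: leq_trans (ltn_ord j) size_xys.
have page_nbr (k : 'I_(p + 2)) : 1 < k -> e x (nth x [:: x, y & s] k) && e y (nth x [:: x, y & s] k).
  case: k => [[|[|k]] //= lt_k _]; apply/s_nbr/mem_nth; rewrite size_s; lia.
move=> [[|[|a]] lt_a] [[|[|b]] lt_b]; rewrite /book //= => _.
- by case/andP: (page_nbr (Ordinal lt_b) isT).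
- by rewrite e_sym.
- by case/andP: (page_nbr (Ordinal lt_b) isT).
- by case/andP: (page_nbr (Ordinal lt_a) isT) => ? _; rewrite e_sym.
- by case/andP: (page_nbr (Ordinal lt_a) isT) => _ ?; rewrite e_sym.
Qed.

Lemma book_freeP p : ~ contains_sub (p + 2) n (book p) e <->
  forall x y, e x y -> n - p.+1 <= #|nonnbrs e x :|: nonnbrs e y|.
Proof.
rewrite contains_bookP; split=> [no_book x y exy | big_nonnbrs [x [y [exy le_p_C]]]].
  have := card_spine_partition exy.
  case: (ltnP #|common_nbrs e x y| p) => [|le_p_C]; first lia.
  by case: no_book; exists x, y.
have := big_nonnbrs x y exy; have := card_spine_partition exy; lia.
Qed.

Lemma sum_nonnbrs_ge_dominating k x0 : #|nonnbrs e x0| = 0 ->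
  (forall x y, e x y -> k <= #|nonnbrs e x :|: nonnbrs e y|) ->
  k * n.-1 <= \sum_x #|nonnbrs e x|.
Proof.
move=> /eqP; rewrite cards_eq0 => /eqP x0_dom k_le.
rewrite (bigD1 x0) //= x0_dom cards0 add0n.
have -> : n.-1 = #|predC1 x0| by rewrite cardC1 card_ord.
rewrite mulnC -sum_nat_const; apply: leq_sum => y y_x0.
have x0y : e x0 y.
  apply/negPn/negP => nxy.
  have : y \in nonnbrs e x0 by rewrite !inE nxy andbT.
  by rewrite x0_dom inE.
by have := k_le _ _ x0y; rewrite x0_dom set0U.
Qed.

Lemma sum_nonnbrs_ge k : (forall x y, e x y -> k <= #|nonnbrs e x :|: nonnbrs e y|) ->
  minn n (k * n.-1) <= \sum_x #|nonnbrs e x|.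
Proof.
move=> k_le; case: (boolP [exists x, #|nonnbrs e x| == 0]) => [/existsP[x0 /eqP x0_dom]|].
  exact: leq_trans (geq_minr _ _) (sum_nonnbrs_ge_dominating x0_dom k_le).
rewrite negb_exists => /forallP nonnbrs_gt0.
apply: leq_trans (geq_minl _ _) _; rewrite -[n in n <= _]card_ord.
apply: leq_trans (sum_ge_card_gt1 _) => [|x]; first exact: leq_addr.
by rewrite lt0n nonnbrs_gt0.
Qed.

Lemma nonnbrs_pair_le1 w u v : u \in nonnbrs e w -> v \in nonnbrs e w -> u != v ->
  #|nonnbrs e u| <= 1 -> #|nonnbrs e v| <= 1 ->
  e u v /\ #|nonnbrs e u :|: nonnbrs e v| <= 1.
Proof.
move=> wu wv uv le1_u le1_v.
have unique_nonnbr z : z \in nonnbrs e w -> #|nonnbrs e z| <= 1 -> nonnbrs e z = [set w].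
  move=> wz le1_z; apply/esym/eqP.
  by rewrite eqEcard sub1set -nonnbrs_sym wz cards1.
have Nu := unique_nonnbr u wu le1_u; have Nv := unique_nonnbr v wv le1_v.
rewrite Nu Nv setUid cards1; split=> //.
have : v \notin nonnbrs e u.
  by rewrite Nu inE; apply: contraTneq wv => ->; rewrite !inE eqxx.
by rewrite inE eq_sym uv negbK.
Qed.

(* Parity excludes d' = 1 everywhere, and a single vertex w with two
   non-neighbours u, v, all others having d' = 1, would leave the edge uv
   missing only w. *)
Lemma sum_nonnbrs_ge_odd : odd n -> 3 < n ->
  (forall x y, e x y -> 1 < #|nonnbrs e x :|: nonnbrs e y|) ->
  n.+2 <= \sum_x #|nonnbrs e x|.
Proof.
move=> odd_n n_gt3 U_gt1.
case: (boolP [exists x, #|nonnbrs e x| == 0]) => [/existsP[x0 /eqP x0_dom]|].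
  by have := sum_nonnbrs_ge_dominating x0_dom U_gt1; move: (\sum_x _) => S; lia.
rewrite negb_exists => /forallP nonnbrs_gt0.
have {}nonnbrs_gt0 x : 0 < #|nonnbrs e x| by rewrite lt0n nonnbrs_gt0.
have := @sum_ge_card_gt1 _ (fun x => #|nonnbrs e x|) nonnbrs_gt0; rewrite card_ord.
set big := [set x | 1 < #|nonnbrs e x|].
have not_big x : x \notin big -> #|nonnbrs e x| <= 1 by rewrite inE -leqNgt.
case: (ltnP 1 #|big|) => [|le1_big]; first by move: (\sum_x _) => S; lia.
move=> sum_ge; case: (posnP #|big|) => [big0 | big_gt0].
  have sum_le : \sum_x #|nonnbrs e x| <= n.
    rewrite -[n in _ <= n]card_ord -sum1_card; apply: leq_sum => x _.
    by apply: not_big; rewrite (card0_eq big0).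
  have := sum_nonnbrs_even; move: sum_ge sum_le; rewrite big0.
  move: (\sum_x _) => S ge le; have -> : S = n by lia.
  by rewrite odd_n.
have /cards1P[w big_w] : #|big| == 1 by rewrite eqn_leq le1_big.
have notin_big z : z \in nonnbrs e w -> #|nonnbrs e z| <= 1.
  by move=> wz; apply: not_big; rewrite big_w inE; apply: contraTneq wz => ->; rewrite !inE eqxx.
have [u [v [wu wv uv]]] : exists u v, [/\ u \in nonnbrs e w, v \in nonnbrs e w & u != v].
  by apply/card_gt1P; move: (set11 w); rewrite -big_w inE.
have [euv U_le1] := nonnbrs_pair_le1 wu wv uv (notin_big _ wu) (notin_big _ wv).
by have := U_gt1 _ _ euv; rewrite ltnNge U_le1.
Qed.
End SimpleGraph.

Lemma card_le_size_val n (A : {pred 'I_n}) (s : seq nat) :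
  (forall z, z \in A -> nat_of_ord z \in s) -> #|A| <= size s.
Proof.
move=> A_s; rewrite cardE -(size_map (@nat_of_ord n)); apply: uniq_leq_size.
  by rewrite map_inj_uniq ?enum_uniq //; apply: val_inj.
by move=> a /mapP[z]; rewrite mem_enum => /A_s zs ->.
Qed.

Definition complete_multipartite n (c : nat -> nat) : rel 'I_n := fun x y => c x != c y.
Arguments complete_multipartite : clear implicits.

Definition has_classmate n (c : nat -> nat) (x : 'I_n) : Prop := exists2 z : 'I_n, z != x & c z = c x.

Section CompleteMultipartite.
Variables (n : nat) (c : nat -> nat).
Local Notation G := (complete_multipartite n c).

Lemma complete_multipartite_simple : simple_graph G.
Proof. by split=> [x y | x]; rewrite /complete_multipartite ?eqxx // eq_sym. Qed.

Lemma in_nonnbrs_multipartite x z : (z \in nonnbrs G x) = (z != x) && (c z == c x).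
Proof. by rewrite !inE negbK [c x == _]eq_sym. Qed.

Lemma card_nonnbrs_multipartite_le x (s : seq nat) :
  (forall z : 'I_n, z != x -> c z = c x -> nat_of_ord z \in s) -> #|nonnbrs G x| <= size s.
Proof.
move=> classmates_s; apply: card_le_size_val => z.
by rewrite in_nonnbrs_multipartite => /andP[zx /eqP]; apply: classmates_s.
Qed.

Lemma nonnbrsU_multipartite_gt0 (x y : 'I_n) : has_classmate c x \/ has_classmate c y ->
  0 < #|nonnbrs G x :|: nonnbrs G y|.
Proof.
by case=> -[z zx czx]; apply/card_gt0P; exists z;
  rewrite inE !in_nonnbrs_multipartite zx czx eqxx ?orbT.
Qed.

Lemma nonnbrsU_multipartite_gt1 (x y : 'I_n) : c x != c y -> has_classmate c x -> has_classmate c y ->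
  1 < #|nonnbrs G x :|: nonnbrs G y|.
Proof.
move=> cxy [z1 z1x cz1] [z2 z2y cz2]; apply/card_gt1P; exists z1, z2.
rewrite !in_setU !in_nonnbrs_multipartite z1x z2y cz1 cz2 !eqxx orbT.
by split=> //; apply: contraNneq cxy => z12; rewrite -cz1 -cz2 z12.
Qed.

End CompleteMultipartite.

(* The parts of [half] are the pairs {2i, 2i+1}; those of [half \o predn] are
   {0, 1, 2}, {3, 4}, {5, 6}, ... *)
Lemma has_classmate_half n (x : 'I_n) : x.+1 < n \/ odd x -> has_classmate half x.
Proof.
move=> x_paired; have lt_x := ltn_ord x.
have [mate lt_mate mate_x] : exists2 m, m < n & (m != x) && (m./2 == x./2).
  by case: (boolP (odd x)) => odd_x; [exists x.-1 | exists x.+1]; lia.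
by exists (Ordinal lt_mate); move: mate_x => /andP[? /eqP].
Qed.

Lemma sum_nonnbrs_half n :
  \sum_x #|nonnbrs (complete_multipartite n half) x| <= n - odd n.
Proof.
case: n => [|m]; first by rewrite big_ord0.
rewrite big_ord_recr /=.
have le1 (x : 'I_m.+1) : #|nonnbrs (complete_multipartite m.+1 half) x| <= 1.
  apply: (@card_nonnbrs_multipartite_le _ _ _ [:: if odd x then x.-1 else x.+1]) => z.
  rewrite inE -val_eqE /= => /eqP zx zx_half; apply/eqP.
  by case: ifP => odd_x; lia.
have last_le : #|nonnbrs (complete_multipartite m.+1 half) ord_max| <= odd m.
  case: (boolP (odd m)) => [_|even_m]; first exact: le1.
  apply: (@card_nonnbrs_multipartite_le _ _ _ [::]) => z /=.
  by rewrite -val_eqE /= => /eqP zx zx_half; have := ltn_ord z; lia.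
have : \sum_(i < m) #|nonnbrs (complete_multipartite m.+1 half) (widen_ord (leqnSn m) i)| <= m.
  by rewrite -[m in _ <= m]card_ord -sum1_card; apply: leq_sum => i _; apply: le1.
by move: last_le; move: (\sum_(i < m) _) #|_| => a b; case: (odd m) => /=; lia.
Qed.

Lemma has_classmate_shifted_half n (x : 'I_n) : odd n -> 2 < n -> has_classmate (half \o predn) x.
Proof.
move=> odd_n n_gt2; have lt_x := ltn_ord x.
have [mate lt_mate mate_x] : exists2 m, m < n & (m != x) && (m.-1./2 == x.-1./2).
  case: (ltnP x 3) => [x_lt3 | x_ge3]; first by exists ((x + 1) %% 3); lia.
  by case: (boolP (odd x)) => odd_x; [exists x.+1 | exists x.-1]; lia.
by exists (Ordinal lt_mate); move: mate_x => /andP[? /eqP].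
Qed.

Lemma sum_nonnbrs_shifted_half n :
  \sum_x #|nonnbrs (complete_multipartite n (half \o predn)) x| <= n + 3.
Proof.
have le (x : 'I_n) : #|nonnbrs (complete_multipartite n (half \o predn)) x| <= 1 + (x < 3).
  case: (ltnP x 3) => [x_lt3 | x_ge3].
    apply: (@card_nonnbrs_multipartite_le _ _ _ [:: (x + 1) %% 3; (x + 2) %% 3]) => z.
    rewrite !inE -val_eqE /= => /eqP zx zx_half; apply/orP.
    by case: (eqVneq (nat_of_ord z) ((x + 1) %% 3)) => [|z1]; [left | right; apply/eqP; lia].
  apply: (@card_nonnbrs_multipartite_le _ _ _ [:: if odd x then x.+1 else x.-1]) => z.
  rewrite inE -val_eqE /= => /eqP zx zx_half; apply/eqP.
  by case: ifP => odd_x; lia.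
apply: (@leq_trans (\sum_(x < n) (1 + (x < 3)))); first by apply: leq_sum => x _.
rewrite big_split /= -[n in _ <= n + _]card_ord -sum1_card leq_add2l.
rewrite -(card_sum_mem [pred x : 'I_n | x < 3]).
by apply: (@card_le_size_val _ _ [:: 0; 1; 2]) => z; rewrite !inE; case: (nat_of_ord z) => [|[|[|]]].
Qed.

Lemma is_turan_number_half n h (eH : rel 'I_h) X :
  (forall e : rel 'I_n, simple_graph e -> ~ contains_sub h n eH e -> gsize e * 2 <= X) ->
  (exists2 e : rel 'I_n, simple_graph e /\ ~ contains_sub h n eH e & X <= gsize e * 2 + 1) ->
  is_turan_number n h eH (X %/ 2).
Proof.
move=> ub [e [e_simple e_free] lb]; split=> [|e' e'_simple e'_free].
  exists e; do 2!split=> //; apply/eqP; rewrite eqn_leq leq_divRL ?ub //=.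
  by rewrite -ltnS ltn_divLR // mulSn; move: (gsize e) lb => g; lia.
by rewrite leq_divRL // ub.
Qed.

Lemma ex_book_order_p2 p : is_turan_number (p + 2) (p + 2) (book p) ((p + 1) ^ 2 %/ 2).
Proof.
apply: is_turan_number_half => [e [e_sym e_irr] /(book_freeP e_sym e_irr) U_ge|].
  have U_ge1 x y : e x y -> 1 <= #|nonnbrs e x :|: nonnbrs e y| by move/U_ge; lia.
  have := sum_nonnbrs_ge U_ge1; have := handshake_nonnbrs e_sym e_irr.
  by move: (\sum_x _) (gsize e) => S g; nia.
pose G := complete_multipartite (p + 2) half.
have [G_sym G_irr] : simple_graph G := complete_multipartite_simple _ _.
have G_free : ~ contains_sub (p + 2) (p + 2) (book p) G.
  apply/(book_freeP G_sym G_irr) => x y cxy.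
  suff : 0 < #|nonnbrs G x :|: nonnbrs G y| by lia.
  apply: nonnbrsU_multipartite_gt0.
  have : x != y by apply: contraTneq cxy => ->; rewrite G_irr.
  rewrite -val_eqE /= => /eqP xy.
  have := ltn_ord x; have := ltn_ord y.
  by case: (ltnP x.+1 (p + 2)) => x_lt; [left | right]; apply: has_classmate_half; left; lia.
exists G; first by [].
have := sum_nonnbrs_half (p + 2); have := handshake_nonnbrs G_sym G_irr.
move: (\sum_x _) (gsize G) => S g.
by rewrite addn2 /= negbK; case: (odd p); nia.
Qed.

Lemma ex_book_order_p3_odd p : odd p ->
  is_turan_number (p + 3) (p + 2) (book p) ((p + 1) * (p + 3) %/ 2).
Proof.
move=> odd_p; apply: is_turan_number_half => [e [e_sym e_irr] /(book_freeP e_sym e_irr) U_ge|].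
  have U_ge2 x y : e x y -> 2 <= #|nonnbrs e x :|: nonnbrs e y| by move/U_ge; lia.
  have := sum_nonnbrs_ge U_ge2; have := handshake_nonnbrs e_sym e_irr.
  by move: (\sum_x _) (gsize e) => S g; nia.
pose G := complete_multipartite (p + 3) half.
have [G_sym G_irr] : simple_graph G := complete_multipartite_simple _ _.
have G_free : ~ contains_sub (p + 2) (p + 3) (book p) G.
  apply/(book_freeP G_sym G_irr) => x y cxy.
  suff : 1 < #|nonnbrs G x :|: nonnbrs G y| by lia.
  have classmate (z : 'I_(p + 3)) : has_classmate half z.
    by apply: has_classmate_half; have := ltn_ord z; case: (ltnP z.+1 (p + 3)); [left | right; lia].
  exact: nonnbrsU_multipartite_gt1.
exists G; first by [].
have := sum_nonnbrs_half (p + 3); have := handshake_nonnbrs G_sym G_irr.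
by move: (\sum_x _) (gsize G) => S g; rewrite addn3 /= odd_p; nia.
Qed.

Lemma ex_book_order_p3_even p : ~~ odd p -> 0 < p ->
  is_turan_number (p + 3) (p + 2) (book p) (p * (p + 4) %/ 2).
Proof.
move=> even_p p_gt0; have def_p := esym (even_halfK even_p).
have odd_n : odd (p + 3) by rewrite addn3 /= even_p.
have n_gt3 : 3 < p + 3 by lia.
apply: is_turan_number_half => [e [e_sym e_irr] /(book_freeP e_sym e_irr) U_ge|].
  have U_gt1 x y : e x y -> 1 < #|nonnbrs e x :|: nonnbrs e y| by move/U_ge; lia.
  have := sum_nonnbrs_ge_odd e_sym e_irr odd_n n_gt3 U_gt1; have := handshake_nonnbrs e_sym e_irr.
  by move: (\sum_x _) (gsize e) => S g; rewrite def_p; nia.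
pose G := complete_multipartite (p + 3) (half \o predn).
have [G_sym G_irr] : simple_graph G := complete_multipartite_simple _ _.
have G_free : ~ contains_sub (p + 2) (p + 3) (book p) G.
  apply/(book_freeP G_sym G_irr) => x y cxy.
  suff : 1 < #|nonnbrs G x :|: nonnbrs G y| by lia.
  by apply: nonnbrsU_multipartite_gt1 => //; apply: has_classmate_shifted_half => //; lia.
exists G; first by [].
have := sum_nonnbrs_shifted_half (p + 3); have := handshake_nonnbrs G_sym G_irr.
by move: (\sum_x _) (gsize G) => S g; rewrite def_p; nia.
Qed.

Theorem lemma8 (p : nat) (hp : 0 < p) :
  (~~ odd p ->
     is_turan_number (p + 2) (p + 2) (book p) (p * (p + 2) %/ 2) /\
     is_turan_number (p + 3) (p + 2) (book p) (p * (p + 4) %/ 2)) /\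
  (odd p ->
     is_turan_number (p + 2) (p + 2) (book p) ((p + 1) ^ 2 %/ 2) /\
     is_turan_number (p + 3) (p + 2) (book p) ((p + 1) * (p + 3) %/ 2)).
Proof.
split=> parity_p; split.
- have def_p := esym (even_halfK parity_p).
  have square : (p + 1) ^ 2 = 2 * (p./2 * (p + 2)) + 1 by rewrite def_p; nia.
  have prod : p * (p + 2) = 2 * (p./2 * (p + 2)) by rewrite def_p; nia.
  have := ex_book_order_p2 p; rewrite square prod.
  by move: (p./2 * (p + 2)) => m; have -> : (2 * m + 1) %/ 2 = 2 * m %/ 2 by lia.
- exact: ex_book_order_p3_even.
- exact: ex_book_order_p2.
- exact: ex_book_order_p3_odd.
Qed.
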